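(* Let $G$ be a finite bipartite graph with maximum degree $\Delta(G)$. Suppose that some set $E_0$ of edges of the Cartesian product $G \square K_2$ is precolored using colors from a set of at most $\Delta(G)+1$ colors, such that the distance between any two edges of $E_0$ is at least three. Then this precoloring is extendable, i.e. there is a proper edge coloring of $G \square K_2$ with $\chi'(G \square K_2)$ colors in which every edge of $E_0$ receives its prescribed color.
   Context: The Cartesian product $G \square H$ has vertex set $V(G)\times V(H)$, with $(u_1,u_2)$ adjacent to $(v_1,v_2)$ iff either $u_1=v_1$ and $u_2v_2 \in E(H)$, or $u_2=v_2$ and $u_1v_1\in E(G)$. The distance between vertices is the length of a shortest path between them, and the distance between edges $xy$ and $zw$ is $\min\{d(x,z),d(x,w),d(y,z),d(y,w)\}$. $\chi'$ denotes the chromatic index. *)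

From mathcomp Require Import all_boot.
Set Implicit Arguments. Unset Strict Implicit. Unset Printing Implicit Defensive.

Definition simple_graph (V : finType) (e : rel V) : Prop :=
  symmetric e /\ irreflexive e.

Definition bipartite (V : finType) (e : rel V) : Prop :=
  exists p : V -> bool, forall x y, e x y -> p x != p y.

Definition edges (V : finType) (e : rel V) : {set {set V}} :=
  [set [set x; y] | x in V, y in V & e x y].

Definition degree (V : finType) (e : rel V) (x : V) : nat := #|[set y | e x y]|.

Definition max_degree (V : finType) (e : rel V) : nat := \max_(x : V) degree e x.

Definition prodK2 (T : finType) (g : rel T) : rel (T * bool) :=
  fun u v => ((u.1 == v.1) && (u.2 != v.2)) || ((u.2 == v.2) && g u.1 v.1).

Fixpoint within (V : finType) (e : rel V) (k : nat) (x y : V) : bool :=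
  match k with
  | 0 => x == y
  | k'.+1 => within e k' x y || [exists z, e x z && within e k' z y]
  end.

Definition edge_dist_ge (V : finType) (e : rel V) (k : nat) (a b : {set V}) : Prop :=
  forall x y, x \in a -> y \in b -> ~~ within e k.-1 x y.

Definition proper_edge_coloring (V : finType) (e : rel V) (k : nat)
  (f : {set V} -> nat) : Prop :=
  (forall a, a \in edges e -> f a < k) /\
  (forall a b, a \in edges e -> b \in edges e -> a != b ->
     (exists v, (v \in a) && (v \in b)) -> f a != f b).

Definition edge_colorable (V : finType) (e : rel V) (k : nat) : Prop :=
  exists f, proper_edge_coloring e k f.

Definition chromatic_index (V : finType) (e : rel V) (k : nat) : Prop :=
  edge_colorable e k /\ forall j, edge_colorable e j -> k <= j.

From mathcomp Require Import all_boot.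
Set Implicit Arguments. Unset Strict Implicit. Unset Printing Implicit Defensive.

(* Give both copies (x,i)(y,i) of an edge xy of G the same colour (the
   precolour of a copy, if any) and colour the rungs (x,0)(x,1) last. As
   precoloured edges are at distance at least three, the fibres over an edge xy
   of G meet at most one precoloured edge, so at most one of the Delta+1
   colours is forbidden on a non-precoloured edge of G. These edges form a
   bipartite graph of maximum degree at most Delta with lists of at least Delta
   colours, so Galvin's theorem colours them; the rung over x then sees at most
   Delta colours and takes its precolour or a missing one. Galvin's theorem
   goes by the kernel method: a Delta-edge-colouring (Koenig, via Kempe chains)
   orients the line graph so that every set of edges has a kernel (found by a
   Gale-Shapley iteration). Finally chi' >= Delta+1, so the (Delta+1)-colouring
   is a chi'-colouring. *)

Lemma missing_value (X : finType) (S : {set X}) (k : X -> nat) (D : nat) :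
  #|S| < D -> exists2 i, i < D & forall x, x \in S -> k x != i.
Proof.
move=> ltSD; have: ~~ all (mem (map k (enum S))) (iota 0 D).
  apply/negP => /allP /(uniq_leq_size (iota_uniq 0 D)).
  by rewrite size_iota size_map -cardE leqNgt ltSD.
case/allPn => i; rewrite mem_iota add0n => ltiD kSi.
exists i => // x xS; apply: contraNneq kSi => <-.
by apply: map_f; rewrite mem_enum.
Qed.

Lemma card_lt_injective_avoid (X : finType) (S : {set X}) (k : X -> nat) (D v : nat) :
  {in S &, injective k} -> (forall x, x \in S -> k x < D) ->
  v < D -> (forall x, x \in S -> k x != v) -> #|S| < D.
Proof.
move=> kinj kD vD kv.
have sub : {subset map k (enum S) <= rem v (iota 0 D)}.
  move=> y /mapP [x]; rewrite mem_enum => xS ->.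
  by rewrite (mem_rem_uniq _ (iota_uniq 0 D)) inE kv // mem_iota add0n kD.
have kuniq : uniq (map k (enum S)).
  by rewrite map_inj_in_uniq ?enum_uniq // => x y; rewrite !mem_enum; apply: kinj.
move: (uniq_leq_size kuniq sub).
rewrite size_map -cardE size_rem ?mem_iota ?add0n // size_iota.
by rewrite -ltnS prednK // (leq_ltn_trans _ vD).
Qed.

Lemma card_lt_injective_miss (X Y : finType) (S : {set X}) (R : {set Y}) (f : X -> Y) y :
  {in S &, injective f} -> (forall x, x \in S -> f x \in R) ->
  y \in R -> (forall x, x \in S -> f x != y) -> #|S| < #|R|.
Proof.
move=> finj fR yR fy; rewrite -(card_in_imset finj); apply: proper_card.
apply/properP; split; first by apply/subsetP => _ /imsetP [x xS ->]; apply: fR.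
by exists y => //; apply/imsetP => -[x xS /eqP]; rewrite eq_sym (negbTE (fy x xS)).
Qed.

Lemma inflating_fixpoint (T : finType) (F : {set T} -> {set T}) :
  (forall X : {set T}, X \subset F X) -> F (iter #|T| F set0) = iter #|T| F set0.
Proof.
move=> Finfl; set n := #|T|.
suff /existsP [[k /= ltkn] /eqP fixk] : [exists k : 'I_n.+1, iter k F set0 == iter k.+1 F set0].
  by rewrite ltnS in ltkn; rewrite -(subnK ltkn) iterD iter_fix.
apply: contraT => /existsPn /(_ (Ordinal _)) /= neq_iter.
suff iter_big k : k <= n.+1 -> k <= #|iter k F set0|.
  by have := iter_big _ (leqnn _); rewrite ltnNge max_card.
elim: k => //= k IHk ltkn; apply: leq_ltn_trans (IHk (ltnW ltkn)) _.
by rewrite proper_card // properEneq Finfl andbT neq_iter.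
Qed.

Section GraphColorings.
Variables (V : finType) (adj : rel V).

Definition proper_on (C : eqType) (U : {set V}) (col : V -> C) : Prop :=
  {in U &, forall e f, adj e f -> col e != col f}.

Definition kernel_of (dom : rel V) (W K : {set V}) : Prop :=
  [/\ K \subset W, {in K &, forall e f, ~~ adj e f}
    & {in W :\: K, forall e, exists2 f, f \in K & dom e f}].

Lemma proper_on_setU1 (C : eqType) (U : {set V}) (col : V -> C) v c :
  symmetric adj -> irreflexive adj -> proper_on U col ->
  (forall e, e \in U -> adj v e -> col e != c) ->
  proper_on (v |: U) (fun e => if e == v then c else col e).
Proof.
move=> adjC adjI colP vc e f; rewrite !in_setU1.
case: (eqVneq e v) => [->|ev]; case: (eqVneq f v) => [->|fv] //= eU fU.
- by rewrite adjI.
- by move=> vf; rewrite eq_sym; apply: vc.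
- by rewrite adjC; apply: vc.
- exact: colP.
Qed.

Section KernelListColoring.
Variables (dom : rel V) (E : {set V}).
Hypothesis kernels :
  forall W : {set V}, W \subset E -> exists K, kernel_of dom W K.

Lemma kernel_outdegree_drop (N : nat) (U K : {set V}) (L : V -> {set 'I_N.+1}) c e :
  kernel_of dom [set f in U | c \in L f] K -> e \in U :\: K ->
  #|[set f in U | dom e f]| < #|L e| ->
  #|[set f in U :\: K | dom e f]| < #|L e :\ c|.
Proof.
move=> [sKW _ Kabs]; rewrite inE => /andP [eK eU] ltL.
have sKU : K \subset U by apply: (subset_trans sKW); apply/subsetP => f; rewrite inE => /andP [].
have sub : [set f in U :\: K | dom e f] \subset [set f in U | dom e f].
  by apply/subsetP => f; rewrite !inE => /andP [/andP [_ ->] ->].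
have [ceL|ceL] := boolP (c \in L e); last first.
  move: ltL; rewrite (cardsD1 c) (negbTE ceL) add0n.
  exact: leq_ltn_trans (subset_leq_card sub).
have [f fK def] : exists2 f, f \in K & dom e f by apply: Kabs; rewrite !inE eK eU.
have sub' : [set f in U :\: K | dom e f] \subset [set f in U | dom e f] :\ f.
  apply/subsetP => h; rewrite !inE => /andP [/andP [hK hU] deh]; rewrite hU deh !andbT.
  by apply: contraNneq hK => ->.
apply: leq_ltn_trans (subset_leq_card sub') _.
move: ltL; rewrite (cardsD1 f) (cardsD1 c) inE (subsetP sKU) // def ceL.
by rewrite ltn_add2l.
Qed.

Lemma kernel_list_coloring (N : nat) (U : {set V}) (L : V -> {set 'I_N.+1}) :
  U \subset E -> (forall e, e \in U -> #|[set f in U | dom e f]| < #|L e|) ->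
  exists col : V -> 'I_N.+1, (forall e, e \in U -> col e \in L e) /\ proper_on U col.
Proof.
have [n] := ubnP #|U|; elim: n U L => // n IH U L ltUn sUE HL.
have [->|[e0 e0U]] := set_0Vmem U.
  by exists (fun _ => ord0); split => [e|e f]; rewrite in_set0.
have [c cL] : exists c, c \in L e0 by apply/card_gt0P; apply: leq_ltn_trans (HL _ e0U).
set W := [set e in U | c \in L e].
have sWU : W \subset U by apply/subsetP => e; rewrite inE => /andP [].
have [K kerK] := kernels (subset_trans sWU sUE).
have [sKW Kind Kabs] := kerK.
have [k0 k0K] : exists k0, k0 \in K.
  have [e0K|e0K] := boolP (e0 \in K); first by exists e0.
  have e0W : e0 \in W :\: K by rewrite !inE e0K e0U cL.
  by have [f fK _] := Kabs e0 e0W; exists f.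
have sKU := subset_trans sKW sWU.
have [col' [col'L col'P]] : exists col' : V -> 'I_N.+1,
    (forall e, e \in U :\: K -> col' e \in L e :\ c) /\ proper_on (U :\: K) col'.
  apply: IH.
  - rewrite -ltnS (leq_trans _ ltUn) // ltnS proper_card //.
    apply/properP; split; first exact: subsetDl.
    by exists k0; rewrite ?inE ?k0K ?(subsetP sKU).
  - exact: subset_trans (subsetDl U K) sUE.
  - move=> e eUK; apply: (kernel_outdegree_drop kerK eUK).
    by apply: HL; move: eUK; rewrite inE => /andP [].
exists (fun e => if e \in K then c else col' e); split.
- move=> e eU; case: ifPn => eK.
    by have := subsetP sKW _ eK; rewrite inE => /andP [].
  by have := col'L e; rewrite !inE eK eU => /(_ isT) /andP [].
- move=> e f eU fU ef; case: ifPn => eK; case: ifPn => fK.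
  + by move: (Kind _ _ eK fK); rewrite ef.
  + by have := col'L f; rewrite !inE fK fU eq_sym => /(_ isT) /andP [].
  + by have := col'L e; rewrite !inE eK eU => /(_ isT) /andP [].
  + by apply: col'P; rewrite ?inE ?eK ?fK.
Qed.

End KernelListColoring.
End GraphColorings.

Section BipartiteEdgeColoring.
Variables (A B : finType) (r : A -> B -> bool).

Definition bip_edges : {set A * B} := [set e | r e.1 e.2].

Definition edge_adj (e f : A * B) := (e != f) && ((e.1 == f.1) || (e.2 == f.2)).

Lemma edge_adjC : symmetric edge_adj.
Proof. by move=> e f; rewrite /edge_adj eq_sym (eq_sym e.1) (eq_sym e.2). Qed.

Lemma edge_adjI : irreflexive edge_adj.
Proof. by move=> e; rewrite /edge_adj eqxx. Qed.

Lemma proper_on_inj (C : eqType) (U : {set A * B}) (k : A * B -> C) e f :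
  proper_on edge_adj U k -> e \in U -> f \in U ->
  e.1 = f.1 \/ e.2 = f.2 -> k e = k f -> e = f.
Proof.
move=> kP eU fU ef kef; apply/eqP; apply: contraT => nef.
have /(kP e f eU fU) : edge_adj e f by rewrite /edge_adj nef; case: ef => ->; rewrite eqxx ?orbT.
by rewrite kef eqxx.
Qed.

Section KempeChain.
Variables (U : {set A * B}) (k : A * B -> nat) (al be : nat) (t0 : B).
Hypothesis kP : proper_on edge_adj U k.
Hypothesis t0_no_be : forall e, e \in U -> e.2 = t0 -> k e != be.
Hypothesis al_neq_be : al != be.

Definition colored (i : nat) e := (e \in U) && (k e == i).

Definition chain_step (b b' : B) := [exists a, colored be (a, b) && colored al (a, b')].

(* [in_chainB b]: an alternating walk from [b], entering A by a [be]-edge and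
   leaving it by an [al]-edge, reaches [t0]; the Kempe chain at [t0] consists of
   the [al]/[be]-edges at the A-vertices [in_chainA]. *)
Definition in_chainB (b : B) := connect chain_step b t0.

Definition in_chainA (a : A) := [exists b, in_chainB b && colored al (a, b)].

Lemma chain_link e : e \in U -> (k e == al) || (k e == be) ->
  in_chainA e.1 = in_chainB e.2.
Proof.
case: e => a b /= eU /orP [/eqP kal|/eqP kbe]; apply/idP/idP.
- case/existsP => b' /andP [chb' /andP [b'U /eqP kb']].
  by have [<-] := proper_on_inj kP b'U eU (or_introl erefl) (etrans kb' (esym kal)).
- by move=> chb; apply/existsP; exists b; rewrite chb /colored eU kal eqxx.
- case/existsP => b' /andP [chb' alb']; apply: connect_trans chb'.
  by apply/connect1/existsP; exists a; rewrite alb' /colored eU kbe eqxx.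
- case/connectP => -[/= _ bt0|b1 p /= /andP [stb1 pth] t0last].
    by have := t0_no_be eU (esym bt0); rewrite kbe eqxx.
  case/existsP: stb1 => a' /andP [/andP [a'U /eqP ka'] alb1].
  have [<-] := proper_on_inj kP a'U eU (or_intror erefl) (etrans ka' (esym kbe)).
  apply/existsP; exists b1; rewrite alb1 andbT.
  by apply/connectP; exists p.
Qed.

Definition in_pair (x : nat) := (x == al) || (x == be).

Definition swap_pair (x : nat) := if x == al then be else if x == be then al else x.

Lemma swap_pair_id x : ~~ in_pair x -> swap_pair x = x.
Proof. by rewrite /swap_pair negb_or => /andP [/negbTE -> /negbTE ->]. Qed.

Lemma swap_pairK : involutive swap_pair.
Proof.
move=> x; have [px|px] := boolP (in_pair x); last by rewrite !swap_pair_id.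
have bal : (be == al) = false by rewrite eq_sym (negbTE al_neq_be).
by case/orP: px => /eqP ->; rewrite /swap_pair ?eqxx ?bal ?eqxx.
Qed.

Lemma in_pair_swap x : in_pair (swap_pair x) = in_pair x.
Proof.
have [px|px] := boolP (in_pair x); last by rewrite swap_pair_id // (negbTE px).
have bal : (be == al) = false by rewrite eq_sym (negbTE al_neq_be).
by case/orP: px => /eqP ->; rewrite /swap_pair /in_pair ?eqxx ?bal ?eqxx ?orbT.
Qed.

Definition swapped e := in_chainA e.1 && (e \in U).

Definition kempe e := if swapped e then swap_pair (k e) else k e.

Lemma in_pair_kempe e : in_pair (kempe e) = in_pair (k e).
Proof. by rewrite /kempe; case: ifP; rewrite ?in_pair_swap. Qed.

Lemma kempe_id e : ~~ in_pair (k e) -> kempe e = k e.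
Proof. by rewrite /kempe => /swap_pair_id ->; case: ifP. Qed.

Lemma swapped_adj e f : e \in U -> f \in U -> edge_adj e f ->
  in_pair (k e) -> in_pair (k f) -> swapped e = swapped f.
Proof.
move=> eU fU /andP [_ /orP [/eqP ef|/eqP ef]] pe pf; rewrite /swapped eU fU !andbT.
  by rewrite ef.
by rewrite (chain_link eU pe) (chain_link fU pf) ef.
Qed.

Lemma kempe_proper : proper_on edge_adj U kempe.
Proof.
move=> e f eU fU ef; have kef := kP eU fU ef.
have [pe|pe] := boolP (in_pair (k e)); have [pf|pf] := boolP (in_pair (k f)).
- rewrite /kempe (swapped_adj eU fU ef pe pf).
  by case: swapped; rewrite ?(inj_eq (can_inj swap_pairK)).
- by apply: contraNneq pf => kef'; rewrite -in_pair_kempe -kef' in_pair_kempe.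
- by apply: contraNneq pe => kef'; rewrite -in_pair_kempe kef' in_pair_kempe.
- by rewrite !kempe_id.
Qed.

Lemma kempe_t0 e : e \in U -> e.2 = t0 -> kempe e != al.
Proof.
move=> eU et0; have [kal|kal] := eqVneq (k e) al.
  have chA : in_chainA e.1.
    apply/existsP; exists t0.
    by rewrite /in_chainB connect0 /colored -et0 -surjective_pairing eU kal eqxx.
  by rewrite /kempe /swapped chA eU /swap_pair kal eqxx eq_sym.
by rewrite kempe_id // negb_or kal t0_no_be.
Qed.

Lemma kempe_fixed a : (forall e, e \in U -> e.1 = a -> k e != al) ->
  forall e, e.1 = a -> kempe e = k e.
Proof.
move=> noal e ea; rewrite /kempe /swapped ea.
suff /negbTE -> : ~~ in_chainA a by [].
apply/existsP => -[b /andP [_ /andP [abU /eqP kab]]].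
by have := noal _ abU erefl; rewrite kab eqxx.
Qed.

Lemma kempe_range e : kempe e = k e \/ in_pair (kempe e).
Proof.
have [pe|pe] := boolP (in_pair (k e)); first by right; rewrite in_pair_kempe.
by left; apply: kempe_id.
Qed.

End KempeChain.

Section Konig.
Variable D : nat.
Hypothesis degA : forall a, #|[set b | r a b]| <= D.
Hypothesis degB : forall b, #|[set a | r a b]| <= D.

Lemma free_color_A (U : {set A * B}) (k : A * B -> nat) s t :
  U \subset bip_edges -> r s t -> (s, t) \notin U ->
  exists2 c, c < D & forall e, e \in U -> e.1 = s -> k e != c.
Proof.
move=> sUE rst stU.
have [|c cD kc] := @missing_value _ [set e in U | e.1 == s] k D.
  apply: leq_trans (degA s); apply: (@card_lt_injective_miss _ _ _ _ snd t).
  - by move=> [a1 b1] [a2 b2]; rewrite !inE /= => /andP [_ /eqP ->] /andP [_ /eqP ->] ->.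
  - move=> e; rewrite !inE => /andP [eU /eqP <-].
    by have := subsetP sUE e eU; rewrite inE.
  - by rewrite inE.
  - move=> [a b]; rewrite inE /= => /andP [abU /eqP as_].
    by apply: contraNneq stU => <-; rewrite -as_.
by exists c => // e eU es; apply: kc; rewrite inE eU es eqxx.
Qed.

Lemma free_color_B (U : {set A * B}) (k : A * B -> nat) s t :
  U \subset bip_edges -> r s t -> (s, t) \notin U ->
  exists2 c, c < D & forall e, e \in U -> e.2 = t -> k e != c.
Proof.
move=> sUE rst stU.
have [|c cD kc] := @missing_value _ [set e in U | e.2 == t] k D.
  apply: leq_trans (degB t); apply: (@card_lt_injective_miss _ _ _ _ fst s).
  - by move=> [a1 b1] [a2 b2]; rewrite !inE /= => /andP [_ /eqP ->] /andP [_ /eqP ->] ->.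
  - move=> e; rewrite !inE => /andP [eU /eqP <-].
    by have := subsetP sUE e eU; rewrite inE.
  - by rewrite inE.
  - move=> [a b]; rewrite inE /= => /andP [abU /eqP bt].
    by apply: contraNneq stU => <-; rewrite -bt.
by exists c => // e eU et; apply: kc; rewrite inE eU et eqxx.
Qed.

Lemma konig_extend (U : {set A * B}) (k : A * B -> nat) s t :
  U \subset bip_edges -> r s t -> (s, t) \notin U ->
  proper_on edge_adj U k -> (forall e, e \in U -> k e < D) ->
  exists k', proper_on edge_adj ((s, t) |: U) k' /\
             forall e, e \in (s, t) |: U -> k' e < D.
Proof.
move=> sUE rst stU kP kD.
have [al alD als] := free_color_A k sUE rst stU.
have [be beD bet] := free_color_B k sUE rst stU.
suff [k' [k'P k'D k's k't]] : exists k', [/\ proper_on edge_adj U k',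
    forall e, e \in U -> k' e < D, forall e, e \in U -> e.1 = s -> k' e != al
    & forall e, e \in U -> e.2 = t -> k' e != al].
  exists (fun e => if e == (s, t) then al else k' e); split.
    apply: proper_on_setU1 edge_adjC edge_adjI k'P _ => e eU /andP [_].
    by case/orP => /eqP st; [apply: k's | apply: k't].
  by move=> e; rewrite in_setU1; case: eqP => //= _; apply: k'D.
have [/existsP [e0 /andP [e0U /andP [/eqP e0t /eqP ke0]]]|t_free] :=
  boolP [exists e in U, (e.2 == t) && (k e == al)]; last first.
  exists k; split => // e eU et; apply: contra t_free => /eqP kal.
  by apply/exists_inP; exists e; rewrite // et kal !eqxx.
have al_be : al != be by rewrite -ke0 bet.
exists (kempe U k al be t); split.
- exact: kempe_proper.
- move=> e eU; case: (kempe_range U k t al_be e) => [->|/orP [] /eqP ->] //.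
  exact: kD.
- by move=> e eU es; rewrite (@kempe_fixed U k al be t s als e es) als.
- by move=> e eU et; apply: kempe_t0.
Qed.

Lemma konig_edge_coloring (U : {set A * B}) : U \subset bip_edges ->
  exists k : A * B -> nat, proper_on edge_adj U k /\ forall e, e \in U -> k e < D.
Proof.
have [n] := ubnP #|U|; elim: n U => // n IH U ltUn sUE.
have [->|[[s t] stU]] := set_0Vmem U.
  by exists (fun _ => 0); split => [e f|e]; rewrite in_set0.
have sU'E : U :\ (s, t) \subset bip_edges := subset_trans (subD1set U (s, t)) sUE.
have ltU'n : #|U :\ (s, t)| < n by move: ltUn; rewrite (cardsD1 (s, t)) stU.
have [k [kP kD]] := IH _ ltU'n sU'E.
have rst : r s t by have := subsetP sUE _ stU; rewrite inE.
have stU' : (s, t) \notin U :\ (s, t) by rewrite !inE eqxx.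
case: (konig_extend sU'E rst stU' kP kD) => k' ext.
by rewrite (setD1K stU) in ext; exists k'.
Qed.

End Konig.

Section GalvinOrientation.
Variable kap : A * B -> nat.
Hypothesis kP : proper_on edge_adj bip_edges kap.

Definition prefers (e f : A * B) :=
  edge_adj e f && (if e.1 == f.1 then kap e < kap f else kap f < kap e).

Lemma prefers_outdegree D e : (forall f, f \in bip_edges -> kap f < D) ->
  e \in bip_edges -> #|[set f in bip_edges | prefers e f]| < D.
Proof.
move=> kD eE; apply: (@card_lt_injective_avoid _ _ kap D (kap e)).
- move=> f g /setIdP [fE /andP [/andP [_ ef] kef]] /setIdP [gE /andP [/andP [_ eg] keg]] kfg.
  apply: (proper_on_inj kP fE gE _ kfg).
  move: kef keg; case: (eqVneq e.1 f.1) => [ef1|nf1]; case: (eqVneq e.1 g.1) => [eg1|ng1].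
  + by left; rewrite -ef1 -eg1.
  + by rewrite kfg => /ltn_trans h /h; rewrite ltnn.
  + by rewrite kfg => h /ltn_trans /(_ h); rewrite ltnn.
  + by move: ef eg; rewrite (negbTE nf1) (negbTE ng1) => /eqP <- /eqP <-; right.
- by move=> f; rewrite inE => /andP [/kD].
- exact: kD.
- move=> f; rewrite inE => /andP [fE /andP [ef _]].
  by rewrite eq_sym; apply: kP.
Qed.

Section Kernel.
Variable W : {set A * B}.
Hypothesis sWE : W \subset bip_edges.

(* Gale-Shapley: with [X] the edges rejected so far, every A-vertex proposes its
   remaining edge of largest colour ([a_best]), and every B-vertex rejects all
   proposals but the one of smallest colour ([b_beaten]). *)
Definition a_best (X : {set A * B}) := [set e in W :\: X |
  [forall f in W :\: X, (f.1 == e.1) ==> (kap f <= kap e)]].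

Definition b_beaten (Y : {set A * B}) :=
  [set e in Y | [exists f in Y, (f.2 == e.2) && (kap f < kap e)]].

Definition reject (X : {set A * B}) := X :|: b_beaten (a_best X).

Definition reject_inv (X : {set A * B}) := X \subset W /\
  forall e, e \in X -> exists2 f, f \in a_best X & f.2 = e.2 /\ kap f < kap e.

Lemma a_best_sub (X : {set A * B}) : a_best X \subset W :\: X.
Proof. by apply/subsetP => e; rewrite inE => /andP []. Qed.

Lemma b_beaten_sub (Y : {set A * B}) : b_beaten Y \subset Y.
Proof. by apply/subsetP => e; rewrite inE => /andP []. Qed.

Lemma a_best_subset (X X' : {set A * B}) e :
  X \subset X' -> e \in a_best X -> e \notin X' -> e \in a_best X'.
Proof.
move=> sX; rewrite !inE => /andP [/andP [eX eW] /forall_inP eb] eX'.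
rewrite eX' eW; apply/forall_inP => f; rewrite !inE => /andP [fX' fW].
by apply: eb; rewrite !inE fW andbT; apply: contra fX'; apply: (subsetP sX).
Qed.

Lemma exists_b_best (Y : {set A * B}) e : e \in Y ->
  exists g, [/\ g \in Y, g.2 = e.2, kap g <= kap e & g \notin b_beaten Y].
Proof.
move=> eY; have [|g /andP [gY /eqP g2] gmin] :=
  @arg_minnP _ e [pred f | (f \in Y) && (f.2 == e.2)] kap; first by rewrite /= eY eqxx.
exists g; split => //; first by apply: gmin; rewrite /= eY eqxx.
rewrite inE gY; apply/existsP => -[f /andP [fY /andP [/eqP f2 ltfg]]].
by have := gmin f; rewrite /= fY f2 g2 eqxx leqNgt ltfg => /(_ isT).
Qed.

Lemma exists_a_best (X : {set A * B}) e : e \in W :\: X ->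
  exists2 g, g \in a_best X & g.1 = e.1 /\ kap e <= kap g.
Proof.
move=> eWX; have [|g /andP [gWX /eqP g1] gmax] :=
  @arg_maxnP _ e [pred f | (f \in W :\: X) && (f.1 == e.1)] kap; first by rewrite /= eWX eqxx.
exists g; last by split => //; apply: gmax; rewrite /= eWX eqxx.
rewrite inE gWX; apply/forall_inP => f fWX; apply/implyP => /eqP f1.
by apply: gmax; rewrite /= fWX f1 g1 eqxx.
Qed.

Lemma reject_inv0 : reject_inv set0.
Proof. by split => [|e]; rewrite ?sub0set ?in_set0. Qed.

Lemma reject_invS (X : {set A * B}) : reject_inv X -> reject_inv (reject X).
Proof.
move=> [sXW Xbeaten]; split.
  apply/subsetP => e; rewrite inE => /orP [/(subsetP sXW) //|].
  by move/(subsetP (b_beaten_sub _))/(subsetP (a_best_sub _)); rewrite inE => /andP [].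
move=> e eR; have [f fbest [f2 ltfe]] :
    exists2 f, f \in a_best X & f.2 = e.2 /\ kap f < kap e.
  move: eR; rewrite inE => /orP [/Xbeaten //|]; rewrite inE => /andP [_].
  by case/exists_inP => f fbest /andP [/eqP f2 ltfe]; exists f.
have [g [gbest g2 legf gnb]] := exists_b_best fbest.
exists g; last by split; [rewrite g2 | apply: leq_ltn_trans ltfe].
apply: (a_best_subset (subsetUl _ _) gbest).
rewrite inE negb_or gnb andbT.
by have := subsetP (a_best_sub X) _ gbest; rewrite inE => /andP [].
Qed.

Lemma a_best_independent (X : {set A * B}) : reject X = X ->
  {in a_best X &, forall e f, ~~ edge_adj e f}.
Proof.
move=> fixX e f ebest fbest; apply/negP => ef.
have Wsub g : g \in a_best X -> g \in bip_edges.
  by move/(subsetP (a_best_sub X)); rewrite inE => /andP [_ /(subsetP sWE)].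
have kef := kP (Wsub e ebest) (Wsub f fbest) ef.
have not_beaten g : g \in a_best X -> g \notin b_beaten (a_best X).
  move=> gbest; apply: contraTN (subsetP (a_best_sub X) g gbest) => gb.
  by rewrite inE -fixX inE gb orbT.
case/andP: ef => _ /orP [/eqP e1|/eqP e2].
- move: ebest fbest => /setIdP [eWX /forall_inP emax] /setIdP [fWX /forall_inP fmax].
  move: (emax f fWX) (fmax e eWX); rewrite e1 eqxx /= => kfe kef'.
  by move: kef; rewrite eqn_leq kfe kef'.
- case: (ltngtP (kap e) (kap f)) => [lt|lt|eq]; last by rewrite eq eqxx in kef.
  + case/negP: (not_beaten f fbest); rewrite inE fbest.
    by apply/exists_inP; exists e; rewrite // e2 eqxx.
  + case/negP: (not_beaten e ebest); rewrite inE ebest.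
    by apply/exists_inP; exists f; rewrite // e2 eqxx.
Qed.

Lemma a_best_absorbing (X : {set A * B}) : reject_inv X ->
  {in W :\: a_best X, forall e, exists2 f, f \in a_best X & prefers e f}.
Proof.
move=> [_ Xbeaten] e; rewrite inE => /andP [ebest eW].
have [eX|eX] := boolP (e \in X).
  have [f fbest [f2 ltfe]] := Xbeaten e eX; exists f => //.
  have ef : e != f by apply: contraTneq ltfe => ->; rewrite ltnn.
  rewrite /prefers /edge_adj ef f2 eqxx orbT /=.
  case: eqP => // e1; case/eqP: ef.
  by rewrite [e]surjective_pairing [f]surjective_pairing e1 f2.
have eWX : e \in W :\: X by rewrite inE eX.
move: ebest; rewrite inE eWX /= negb_forall_in => /existsP [f /andP [fWX]].
rewrite negb_imply -ltnNge => /andP [/eqP f1 ltef].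
have [g gbest [g1 lefg]] := exists_a_best fWX.
have ltg : kap e < kap g := leq_trans ltef lefg.
exists g => //; rewrite /prefers /edge_adj g1 f1 eqxx ltg !andbT.
by apply: contraTneq ltg => ->; rewrite ltnn.
Qed.

Lemma bipartite_kernel : exists K, kernel_of edge_adj prefers W K.
Proof.
set X := iter #|{: A * B}| reject set0.
have fixX : reject X = X by apply: inflating_fixpoint => Y; apply: subsetUl.
have invX : reject_inv X.
  by rewrite /X; elim: #|_| => [|n IH]; [exact: reject_inv0 | exact: reject_invS].
exists (a_best X); split.
- by apply: subset_trans (a_best_sub X) (subsetDl _ _).
- exact: a_best_independent.
- exact: a_best_absorbing.
Qed.

End Kernel.
End GalvinOrientation.

Theorem galvin_list_edge_coloring (D N : nat)
  (degA : forall a, #|[set b | r a b]| <= D) (degB : forall b, #|[set a | r a b]| <= D)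
  (L : A * B -> {set 'I_N.+1}) :
  (forall e, e \in bip_edges -> D <= #|L e|) ->
  exists col : A * B -> 'I_N.+1,
    (forall e, e \in bip_edges -> col e \in L e) /\ proper_on edge_adj bip_edges col.
Proof.
move=> Lbig; have [kap [kP kD]] := konig_edge_coloring degA degB (subxx bip_edges).
apply: (kernel_list_coloring (dom := prefers kap) (E := bip_edges)) => // [W sWE|e eE].
  exact: bipartite_kernel.
exact: leq_trans (prefers_outdegree kP kD eE) (Lbig e eE).
Qed.

End BipartiteEdgeColoring.

Arguments edge_adj {A B}.

Lemma within_refl (V : finType) (e : rel V) k x : within e k x x.
Proof. by elim: k => [|k IH] /=; rewrite ?eqxx ?IH. Qed.

Lemma within_succ (V : finType) (e : rel V) k x y : within e k x y -> within e k.+1 x y.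
Proof. by move=> wxy /=; rewrite wxy. Qed.

Lemma within_step (V : finType) (e : rel V) k x z y :
  e x z -> within e k z y -> within e k.+1 x y.
Proof. by move=> exz wzy /=; apply/orP; right; apply/existsP; exists z; rewrite exz. Qed.

Lemma set2_eq (V : finType) (u v u' v' : V) : u != v -> [set u; v] = [set u'; v'] ->
  (u' = u /\ v' = v) \/ (u' = v /\ v' = u).
Proof.
move=> uv E.
have : u' \in [set u; v] by rewrite E !inE eqxx.
have : v' \in [set u; v] by rewrite E !inE eqxx orbT.
have : u \in [set u'; v'] by rewrite -E !inE eqxx.
have : v \in [set u'; v'] by rewrite -E !inE eqxx orbT.
rewrite !inE => /orP [/eqP->|/eqP->] /orP [/eqP->|/eqP->] /orP [/eqP e1|/eqP e2]
  /orP [/eqP e3|/eqP e4]; subst; rewrite ?eqxx in uv; by [left|right|].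
Qed.

Section Edges.
Variables (V : finType) (e : rel V).

Lemma in_edges u v : e u v -> [set u; v] \in edges e.
Proof. by move=> euv; apply/imset2P; exists u v => //; rewrite inE. Qed.

Lemma edgesP a : a \in edges e -> exists u v, a = [set u; v] /\ e u v.
Proof. by case/imset2P => u v _; rewrite inE => euv ->; exists u, v. Qed.

Lemma edges_at a w : symmetric e -> a \in edges e -> w \in a ->
  exists u, a = [set w; u] /\ e w u.
Proof.
move=> esym /edgesP [u [v [-> euv]]]; rewrite !inE => /orP [/eqP ->|/eqP ->].
  by exists v.
by exists u; rewrite setUC esym.
Qed.

End Edges.

Section ProductK2.
Variables (T : finType) (g : rel T).
Hypotheses (gsym : symmetric g) (girr : irreflexive g).

Notation G2 := (prodK2 g).

Lemma prodK2_sym : symmetric G2.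
Proof. by move=> u v; rewrite /prodK2 (eq_sym u.1) (eq_sym u.2) gsym (eq_sym v.2). Qed.

Lemma prodK2_irr : irreflexive G2.
Proof. by move=> u; rewrite /prodK2 !eqxx /= girr. Qed.

Lemma prodK2P u v : G2 u v -> (u.1 = v.1 /\ u.2 != v.2) \/ (u.2 = v.2 /\ g u.1 v.1).
Proof. by case/orP => /andP [/eqP -> ->]; [left | right]. Qed.

Lemma within_prodK2 s t : (s.1 == t.1) || g s.1 t.1 -> within G2 2 s t.
Proof.
have fiber u v : u.1 = v.1 -> within G2 1 u v.
  move=> uv1; have [->|uv] := eqVneq u v; first exact: within_refl.
  apply: within_step (within_refl _ 0 v); rewrite /prodK2 uv1 eqxx /= girr andbF orbF.
  by apply: contra uv => /eqP uv2; rewrite [u]surjective_pairing [v]surjective_pairing uv1 uv2.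
case/orP => [/eqP st1|gst]; first exact/within_succ/fiber.
by apply: (@within_step _ _ _ _ (t.1, s.2)); [rewrite /prodK2 /= eqxx gst orbT | apply: fiber].
Qed.

(* [x0] only witnesses that [T] is nonempty. *)
Lemma max_degree_lt (k : nat) (f : {set T * bool} -> nat) (x0 : T) :
  proper_edge_coloring G2 k f -> max_degree g < k.
Proof.
move=> [fk fP].
have [x ->] : {x | max_degree g = degree g x}.
  by apply: eq_bigmax; apply/card_gt0P; exists x0.
pose R := [set (x, false); (x, true)]; pose C y := [set (x, false); (y, false)].
have RE : R \in edges G2 by apply: in_edges; rewrite /prodK2 /= eqxx.
have CE y : g x y -> C y \in edges G2.
  by move=> gxy; apply: in_edges; rewrite /prodK2 /= andbF gxy.
have xC y : (x, false) \in C y by rewrite !inE eqxx.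
apply: (@card_lt_injective_avoid _ _ (fun y => f (C y)) k (f R)).
- move=> y z; rewrite !inE => gxy gxz fyz; apply/eqP; apply: contraT => yz.
  have Cyz : C y != C z.
    apply: contraNneq yz => Cyz; have : (y, false) \in C z by rewrite -Cyz !inE eqxx orbT.
    by rewrite !inE !xpair_eqE !andbT => /orP [/eqP yx|//]; rewrite yx girr in gxy.
  have common : exists v, (v \in C y) && (v \in C z) by exists (x, false); rewrite !xC.
  by have := fP _ _ (CE y gxy) (CE z gxz) Cyz common; rewrite fyz eqxx.
- by move=> y; rewrite inE => /CE /fk.
- exact: fk.
- move=> y; rewrite inE => gxy.
  have CR : C y != R.
    apply/eqP => CyR; have : (x, true) \in C y by rewrite CyR !inE eqxx orbT.
    by rewrite !inE !xpair_eqE !andbF.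
  by apply: fP (CE y gxy) RE CR _; exists (x, false); rewrite xC !inE eqxx.
Qed.

Section Precoloring.
Variable p : T -> bool.
Hypothesis p_bip : forall x y, g x y -> p x != p y.
Variables (E0 : {set {set T * bool}}) (c : {set T * bool} -> nat).
Notation Delta := (max_degree g).
Hypothesis HE0 : E0 \subset edges G2.
Hypothesis Hc : forall a, a \in E0 -> c a < Delta.+1.
Hypothesis Hdist : forall a b, a \in E0 -> b \in E0 -> a != b -> edge_dist_ge G2 3 a b.

Definition touches (x : T) (a : {set T * bool}) := ((x, false) \in a) || ((x, true) \in a).

Definition rung x : {set T * bool} := [set (x, false); (x, true)].

Definition copy (i : bool) x y : {set T * bool} := [set (x, i); (y, i)].

Definition precol x y := (copy false x y \in E0) || (copy true x y \in E0).

Definition precol_color x y :=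
  if copy false x y \in E0 then c (copy false x y) else c (copy true x y).

Definition forbidden x (i : nat) := [exists a in E0, touches x a && (c a == i)].

Lemma precolP x y : precol x y -> exists i, copy i x y \in E0.
Proof. by case/orP; eexists; eauto. Qed.

Lemma precol_copy i x y : copy i x y \in E0 -> precol x y.
Proof. by rewrite /precol; case: i => ->; rewrite ?orbT. Qed.

Lemma touches_rung x : touches x (rung x).
Proof. by rewrite /touches !inE eqxx. Qed.

Lemma touches_copy i x y : touches x (copy i x y).
Proof. by rewrite /touches !inE; case: i; rewrite eqxx ?orbT. Qed.

Lemma copyC i x y : copy i x y = copy i y x.
Proof. exact: setUC. Qed.

Lemma precolC x y : precol x y = precol y x.
Proof. by rewrite /precol !(copyC _ x y). Qed.

Lemma precol_colorC x y : precol_color x y = precol_color y x.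
Proof. by rewrite /precol_color !(copyC _ x y). Qed.

Lemma precolored_unique x y a b : a \in E0 -> b \in E0 -> (x == y) || g x y ->
  touches x a -> touches y b -> a = b.
Proof.
move=> aE bE xy xa yb; apply/eqP; apply: contraT => ab.
have [s sa s1] : exists2 s, s \in a & s.1 = x by case/orP: xa; eexists; eauto.
have [t tb t1] : exists2 t, t \in b & t.1 = y by case/orP: yb; eexists; eauto.
by case/negP: (Hdist aE bE ab sa tb); apply: within_prodK2; rewrite s1 t1.
Qed.

Lemma precolored_at x a b : a \in E0 -> b \in E0 -> touches x a -> touches x b -> a = b.
Proof. by move=> aE bE; apply: precolored_unique; rewrite ?eqxx. Qed.

Lemma rung_neq_copy i x y : g x y -> rung x != copy i x y.
Proof.
move=> gxy; apply/eqP => E.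
have : (x, ~~ i) \in copy i x y by rewrite -E !inE; case: (~~ i); rewrite eqxx ?orbT.
rewrite !inE => /orP [/eqP [/eqP]|/eqP [xy _]]; first by case: (i).
by rewrite xy girr in gxy.
Qed.

Lemma copy_neq i j x y z : g x y -> y != z -> copy i x y != copy j x z.
Proof.
move=> gxy yz; apply/eqP => E.
have : (y, i) \in copy j x z by rewrite -E !inE eqxx orbT.
rewrite !inE => /orP [/eqP [yx _]|/eqP [yz' _]]; first by rewrite yx girr in gxy.
by rewrite yz' eqxx in yz.
Qed.

Lemma precol_colorE i x y : copy i x y \in E0 -> precol_color x y = c (copy i x y).
Proof.
move=> ciE; rewrite /precol_color; case: ifPn => [cfE|]; last by case: i ciE => // ->.
case: i ciE => // ctE.
have := precolored_at ctE cfE (touches_copy true x y) (touches_copy false x y).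
by move=> ->.
Qed.

(* Each non-precoloured edge of G is stored once, as [(x, y)] with [p x = false]. *)
Definition free_edge (x y : T) := g x y && ~~ p x && ~~ precol x y.

Definition allowed_colors (e : T * T) : {set 'I_Delta.+1} :=
  [set i : 'I_Delta.+1 | ~~ forbidden e.1 i && ~~ forbidden e.2 i].

Lemma degree_le x : #|[set y | g x y]| <= Delta.
Proof. exact: (@leq_bigmax _ (degree g) x). Qed.

Lemma free_degA x : #|[set y | free_edge x y]| <= Delta.
Proof.
apply: leq_trans (degree_le x); apply: subset_leq_card; apply/subsetP => y.
by rewrite !inE => /andP [/andP [-> _] _].
Qed.

Lemma free_degB y : #|[set x | free_edge x y]| <= Delta.
Proof.
apply: leq_trans (degree_le y); apply: subset_leq_card; apply/subsetP => x.
by rewrite !inE gsym => /andP [/andP [-> _] _].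
Qed.

Lemma forbidden_unique z w i j : (z == w) || g z w ->
  forbidden z i -> forbidden w j -> i = j.
Proof.
move=> zw /exists_inP [a aE /andP [za /eqP <-]] /exists_inP [b bE /andP [wb /eqP <-]].
by rewrite (precolored_unique aE bE zw za wb).
Qed.

Lemma allowed_colors_card e : e \in bip_edges free_edge -> Delta <= #|allowed_colors e|.
Proof.
case: e => x y; rewrite inE /= => /andP [/andP [gxy _] _].
have near z w : z \in [:: x; y] -> w \in [:: x; y] -> (z == w) || g z w.
  by rewrite !inE => /orP [] /eqP -> /orP [] /eqP ->; rewrite ?eqxx ?(gsym y) ?gxy ?orbT.
have : #|~: allowed_colors (x, y)| <= 1.
  apply/card_le1_eqP => i j; rewrite !inE /= !negb_and !negbK => fi fj.
  have [z zxy fzi] : exists2 z, z \in [:: x; y] & forbidden z i.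
    by case/orP: fi; [exists x | exists y]; rewrite ?inE ?eqxx ?orbT.
  have [w wxy fwj] : exists2 w, w \in [:: x; y] & forbidden w j.
    by case/orP: fj; [exists x | exists y]; rewrite ?inE ?eqxx ?orbT.
  by apply: val_inj; rewrite /= (forbidden_unique (near w z wxy zxy) fwj fzi).
by rewrite -(leq_add2l #|allowed_colors (x, y)|) cardsC card_ord addn1 ltnS.
Qed.

Definition orient x y := if p x then (y, x) else (x, y).

Lemma orientC x y : g x y -> orient x y = orient y x.
Proof.
move=> gxy; have := p_bip gxy.
by rewrite /orient; case: (p x); case: (p y).
Qed.

Lemma orient_free x y : g x y -> ~~ precol x y -> orient x y \in bip_edges free_edge.
Proof.
move=> gxy nxy; rewrite inE /orient /free_edge; case: ifPn => px /=.
  by rewrite gsym gxy precolC nxy andbT; move: (p_bip gxy); rewrite px; case: (p y).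
by rewrite gxy px nxy.
Qed.

Lemma allowed_colors_orient x y i :
  (i \in allowed_colors (orient x y)) = ~~ forbidden x i && ~~ forbidden y i.
Proof. by rewrite inE /orient; case: (p x) => //=; rewrite andbC. Qed.

Lemma orient_adj x y z : g x y -> g x z -> y != z -> edge_adj (orient x y) (orient x z).
Proof.
move=> gxy gxz yz; rewrite /edge_adj /orient.
case: (p x) => /=; rewrite eqxx ?orbT andbT; apply: contra yz => /eqP; by case=> ->.
Qed.

Section LayerColoring.
Variable col : T * T -> 'I_Delta.+1.
Hypothesis colL : forall e, e \in bip_edges free_edge -> col e \in allowed_colors e.
Hypothesis colP : proper_on edge_adj (bip_edges free_edge) col.

Definition layer_color x y : nat :=
  if precol x y then precol_color x y else col (orient x y).

Lemma layer_colorC x y : g x y -> layer_color x y = layer_color y x.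
Proof. by move=> gxy; rewrite /layer_color precolC precol_colorC orientC. Qed.

Lemma layer_color_lt x y : layer_color x y < Delta.+1.
Proof.
rewrite /layer_color; case: ifP => // /precolP [i ciE].
by rewrite (precol_colorE ciE) Hc.
Qed.

Lemma layer_color_free x y : g x y -> ~~ precol x y ->
  ~~ forbidden x (layer_color x y) && ~~ forbidden y (layer_color x y).
Proof.
move=> gxy nxy; rewrite /layer_color (negbTE nxy) -allowed_colors_orient.
exact/colL/orient_free.
Qed.

Lemma layer_color_forbidden x y : precol x y -> forbidden x (layer_color x y).
Proof.
rewrite /layer_color => xy; rewrite xy.
have [i ciE] := precolP xy.
rewrite (precol_colorE ciE); apply/exists_inP; exists (copy i x y) => //.
by rewrite touches_copy eqxx.
Qed.

Lemma layer_color_proper x y z : g x y -> g x z -> y != z ->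
  layer_color x y != layer_color x z.
Proof.
move=> gxy gxz yz.
have [xy|nxy] := boolP (precol x y); have [xz|nxz] := boolP (precol x z).
- have [i ciE] := precolP xy; have [j cjE] := precolP xz.
  have := precolored_at ciE cjE (touches_copy i x y) (touches_copy j x z).
  by move/eqP; rewrite (negbTE (copy_neq i j gxy yz)).
- have /andP [+ _] := layer_color_free gxz nxz.
  by apply: contraNneq => <-; apply: layer_color_forbidden.
- have /andP [+ _] := layer_color_free gxy nxy.
  by apply: contraNneq => ->; apply: layer_color_forbidden.
- rewrite /layer_color (negbTE nxy) (negbTE nxz) (inj_eq val_inj).
  by apply: colP; rewrite ?orient_free ?orient_adj.
Qed.

Definition rung_color x : nat :=
  if rung x \in E0 then c (rung x)
  else odflt ord0 [pick i : 'I_Delta.+1 | [forall y, g x y ==> (layer_color x y != i)]].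

Lemma rung_color_lt x : rung_color x < Delta.+1.
Proof. by rewrite /rung_color; case: ifP => [/Hc|]. Qed.

Lemma rung_color_proper x y : g x y -> rung_color x != layer_color x y.
Proof.
move=> gxy; rewrite /rung_color; case: ifPn => [rE|_].
  have [xy|nxy] := boolP (precol x y).
    have [i ciE] := precolP xy.
    have := precolored_at rE ciE (touches_rung x) (touches_copy i x y).
    by move/eqP; rewrite (negbTE (rung_neq_copy i gxy)).
  have /andP [+ _] := layer_color_free gxy nxy.
  apply: contraNneq => <-; apply/exists_inP; exists (rung x) => //.
  by rewrite touches_rung eqxx.
case: pickP => [i /forallP /(_ y) /implyP /(_ gxy) /=|none]; first by rewrite eq_sym.
have [|i iD avoid] := @missing_value _ [set y | g x y] (layer_color x) Delta.+1.
  exact: degree_le.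
have := none (Ordinal iD); rewrite /=; case/forallP => z; apply/implyP => gxz.
by apply: avoid; rewrite inE.
Qed.

Definition pair_color (u v : T * bool) : nat :=
  if u.1 == v.1 then rung_color u.1 else layer_color u.1 v.1.

Definition product_color (a : {set T * bool}) : nat :=
  if [pick uv : (T * bool) * (T * bool) | (a == [set uv.1; uv.2]) && G2 uv.1 uv.2]
  is Some uv then pair_color uv.1 uv.2 else 0.

Lemma pair_colorC u v : G2 u v -> pair_color u v = pair_color v u.
Proof.
move=> uv; rewrite /pair_color eq_sym; case: eqP => [->//|neq].
by case: (prodK2P uv) => [[uv1 _]|[_ guv]]; [case: neq | apply: layer_colorC].
Qed.

Lemma product_colorE u v : G2 u v -> product_color [set u; v] = pair_color u v.
Proof.
move=> uv; have nuv : u != v by apply: contraTneq uv => ->; rewrite prodK2_irr.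
rewrite /product_color; case: pickP => [[u' v'] /andP [/eqP /= E uv'] | none].
  by case: (set2_eq nuv E) => -[-> ->] //; rewrite pair_colorC // prodK2_sym.
by have := none (u, v); rewrite /= eqxx uv.
Qed.

Lemma product_color_lt a : a \in edges G2 -> product_color a < Delta.+1.
Proof.
case/edgesP => u [v [-> uv]]; rewrite product_colorE // /pair_color.
by case: ifP => _; [apply: rung_color_lt | apply: layer_color_lt].
Qed.

Lemma pair_color_rung u v : u.1 = v.1 -> pair_color u v = rung_color u.1.
Proof. by rewrite /pair_color => ->; rewrite eqxx. Qed.

Lemma pair_color_layer u v : g u.1 v.1 -> pair_color u v = layer_color u.1 v.1.
Proof. by move=> guv; rewrite /pair_color ifN //; apply: contraTneq guv => ->; rewrite girr. Qed.

Lemma product_color_proper a b : a \in edges G2 -> b \in edges G2 -> a != b ->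
  (exists w, (w \in a) && (w \in b)) -> product_color a != product_color b.
Proof.
move=> aE bE ab [w /andP [wa wb]].
have [u [au wu]] := edges_at prodK2_sym aE wa; have [v [bv wv]] := edges_at prodK2_sym bE wb.
have uv : u != v by apply: contraNneq ab => uv; rewrite au bv uv.
rewrite au bv !product_colorE //.
case: (prodK2P wu) => [[wu1 wu2]|[wu2 gwu]]; case: (prodK2P wv) => [[wv1 wv2]|[wv2 gwv]].
- case/negP: uv; move: wu1 wv1 wu2 wv2.
  case: u {au wu} => u1 u2; case: v {bv wv} => v1 v2 /= <- <-.
  by rewrite xpair_eqE eqxx /=; case: (w.2); case: u2; case: v2.
- by rewrite pair_color_rung // pair_color_layer // rung_color_proper.
- by rewrite pair_color_layer // pair_color_rung // eq_sym rung_color_proper.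
- rewrite !pair_color_layer //; apply: layer_color_proper => //.
  by apply: contra uv => /eqP u1; rewrite [u]surjective_pairing [v]surjective_pairing u1 -wu2 -wv2.
Qed.

Lemma product_color_precolored a : a \in E0 -> product_color a = c a.
Proof.
move=> aE0; have [u [v [a_uv uv]]] := edgesP (subsetP HE0 a aE0).
rewrite a_uv product_colorE // -a_uv.
case: (prodK2P uv) => [[uv1 uv2]|[uv2 guv]].
  have a_rung : a = rung u.1.
    rewrite a_uv /rung [u]surjective_pairing [v]surjective_pairing -uv1 /=.
    by move: uv2; case: (u.2); case: (v.2) => //= _; rewrite setUC.
  by rewrite pair_color_rung // /rung_color -a_rung aE0.
have a_copy : a = copy u.2 u.1 v.1 by rewrite a_uv /copy {2}uv2 -!surjective_pairing.
have cE : copy u.2 u.1 v.1 \in E0 by rewrite -a_copy.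
by rewrite pair_color_layer // /layer_color (precol_copy cE) a_copy (precol_colorE cE).
Qed.

End LayerColoring.

Lemma precoloring_extension : exists f,
  proper_edge_coloring G2 Delta.+1 f /\ forall a, a \in E0 -> f a = c a.
Proof.
have [col [colL colP]] := galvin_list_edge_coloring free_degA free_degB allowed_colors_card.
exists (product_color col); split; last exact: product_color_precolored.
split; [exact: product_color_lt | exact: product_color_proper].
Qed.

End Precoloring.

Lemma proper_edge_coloring_max_degree k f f0 :
  proper_edge_coloring G2 (max_degree g).+1 f -> proper_edge_coloring G2 k f0 ->
  proper_edge_coloring G2 k f.
Proof.
move=> [flt fP] f0P; split => // a aE; have [u [v [_ _]]] := edgesP aE.
exact: leq_trans (flt a aE) (max_degree_lt u.1 f0P).
Qed.

End ProductK2.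

Theorem theorem3 (T : finType) (g : rel T)
  (Hg : simple_graph g) (Hbip : bipartite g)
  (E0 : {set {set (T * bool)}}) (c : {set (T * bool)} -> nat)
  (HE0 : E0 \subset edges (prodK2 g))
  (Hc : forall a, a \in E0 -> c a < (max_degree g).+1)
  (Hdist : forall a b, a \in E0 -> b \in E0 -> a != b ->
             edge_dist_ge (prodK2 g) 3 a b) :
  forall chi, chromatic_index (prodK2 g) chi ->
  exists f : {set (T * bool)} -> nat,
    proper_edge_coloring (prodK2 g) chi f /\
    (forall a, a \in E0 -> f a = c a).
Proof.
move=> chi [[f0 f0P] _]; have [gsym girr] := Hg; have [p p_bip] := Hbip.
have [f [fP fE0]] := precoloring_extension gsym girr p_bip HE0 Hc Hdist.
by exists f; split; first exact: proper_edge_coloring_max_degree fP f0P.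
Qed.
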